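(* Let $1\le r<N$, $r\le m$, and assume $\widehat\lambda_r>0$. Write $\epsilon=\|L_N-L_m\|_{HS}$ and suppose $$\Delta:=\frac{\lambda_r-\lambda_{r+1}}{N}>3\epsilon.$$ Then $$\|\Delta H\|_2\le\frac{4\epsilon}{\Delta-\epsilon}\le\frac{6\epsilon}{\Delta}.$$
   Context: Let $\mathcal X$ be a set and $\kappa:\mathcal X\times\mathcal X\to\mathbb R$ a positive semidefinite kernel with $\kappa(\mathbf x,\mathbf x)\le1$. Let $\mathcal H_\kappa$ be its RKHS, with inner product $\langle\cdot,\cdot\rangle$. Let $\mathcal D=\{\mathbf x_1,\ldots,\mathbf x_N\}$ and $K=[\kappa(\mathbf x_i,\mathbf x_j)]_{N\times N}$. Assume $K$ is positive definite, with eigenvalues $\lambda_1\ge\cdots\ge\lambda_N>0$ and orthonormal eigenvectors $\mathbf v_i$. Put $V_{i,j}=[(\mathbf v_1,\ldots,\mathbf v_N)]_{i,j}$. Let $\widehat{\mathbf x}_1,\ldots,\widehat{\mathbf x}_m$ be sampled uniformly from $\mathcal D$. Let $\widehat K=[\kappa(\widehat{\mathbf x}_i,\widehat{\mathbf x}_j)]_{m\times m}$, with eigenvalues $\widehat\lambda_1\ge\cdots\ge\widehat\lambda_m$ and orthonormal eigenvectors $\mathbf u_i$. Put $U_{i,j}=[(\mathbf u_1,\ldots,\mathbf u_r)]_{i,j}$. Define the operators $$L_N[f]=\frac1N\sum_{i=1}^N\kappa(\mathbf x_i,\cdot)f(\mathbf x_i),\qquad L_m[f]=\frac1m\sum_{i=1}^m\kappa(\widehat{\mathbf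 x}_i,\cdot)f(\widehat{\mathbf x}_i).$$ Define $$\varphi_j=\lambda_j^{-1/2}\sum_{i=1}^N V_{i,j}\kappa(\mathbf x_i,\cdot)\quad(j\in[N]),\qquad \widehat\varphi_j=\widehat\lambda_j^{-1/2}\sum_{i=1}^m U_{i,j}\kappa(\widehat{\mathbf x}_i,\cdot)\quad(j\le r).$$ Define $\|L\|_{HS}=\big(\sum_{i,j=1}^N\langle\varphi_i,L\varphi_j\rangle^2\big)^{1/2}$. Define $H_r[f]=\sum_{i=1}^r\varphi_i\langle\varphi_i,f\rangle$, $\widehat H_r[f]=\sum_{i=1}^r\widehat\varphi_i\langle\widehat\varphi_i,f\rangle$, and $\Delta H=H_r-\widehat H_r$. Here $\|\cdot\|_2$ is the operator norm on $\mathcal H_\kappa$. *)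

From Stdlib Require Import Reals.
Open Scope R_scope.

Fixpoint sumR (n : nat) (f : nat -> R) : R :=
  match n with O => 0 | S k => sumR k f + f k end.

Record InnerProductSpace := {
  car :> Type;
  vzero : car;
  vadd : car -> car -> car;
  vscal : R -> car -> car;
  inner : car -> car -> R;
  vadd_assoc : forall f g h, vadd f (vadd g h) = vadd (vadd f g) h;
  vadd_comm : forall f g, vadd f g = vadd g f;
  vadd_0 : forall f, vadd f vzero = f;
  vadd_opp : forall f, vadd f (vscal (-1) f) = vzero;
  vscal_assoc : forall a b f, vscal a (vscal b f) = vscal (a * b) f;
  vscal_1 : forall f, vscal 1 f = f;
  vscal_distr_v : forall a f g, vscal a (vadd f g) = vadd (vscal a f) (vscal a g);
  vscal_distr_s : forall a b f, vscal (a + b) f = vadd (vscal a f) (vscal b f);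
  inner_sym : forall f g, inner f g = inner g f;
  inner_add_l : forall f g h, inner (vadd f g) h = inner f h + inner g h;
  inner_scal_l : forall a f g, inner (vscal a f) g = a * inner f g;
  inner_pos : forall f, 0 <= inner f f;
  inner_def : forall f, inner f f = 0 -> f = vzero
}.
Arguments vzero {i}.
Arguments vadd {i}.
Arguments vscal {i}.
Arguments inner {i}.

Section Ops.
Variable E : InnerProductSpace.

Fixpoint vsum (n : nat) (g : nat -> E) : E :=
  match n with O => vzero | S k => vadd (vsum k g) (g k) end.

Definition vsub (f g : E) : E := vadd f (vscal (-1) g).

Definition norm (f : E) : R := sqrt (inner f f).

Definition op_norm_le (T : E -> E) (c : R) : Prop :=
  forall f, norm (T f) <= c * norm f.

Variable X : Type.
Variable Phi : X -> E.   (* Phi z plays the role of kappa(z, .) *)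

(* L[f] = 1/n sum_i kappa(z_i,.) f(z_i),  with f(z_i) = <f, kappa(z_i,.)> *)
Definition L_op (n : nat) (z : nat -> X) (f : E) : E :=
  vscal (/ INR n) (vsum n (fun i => vscal (inner f (Phi (z i))) (Phi (z i)))).

Definition eigfun (n : nat) (z : nat -> X) (lam : nat -> R) (V : nat -> nat -> R)
  (j : nat) : E :=
  vscal (/ sqrt (lam j)) (vsum n (fun i => vscal (V i j) (Phi (z i)))).

Definition proj_op (phi : nat -> E) (r : nat) (f : E) : E :=
  vsum r (fun i => vscal (inner (phi i) f) (phi i)).

Definition hs_norm (phi : nat -> E) (n : nat) (T : E -> E) : R :=
  sqrt (sumR n (fun i => sumR n (fun j => (inner (phi i) (T (phi j))) ^ 2))).
End Ops.
Arguments vsum {E}. Arguments vsub {E}. Arguments norm {E}.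
Arguments op_norm_le {E}. Arguments L_op {E X}. Arguments eigfun {E X}.
Arguments proj_op {E}. Arguments hs_norm {E}.

Definition psd_kernel {X : Type} (k : X -> X -> R) : Prop :=
  forall (n : nat) (z : nat -> X) (c : nat -> R),
    0 <= sumR n (fun i => sumR n (fun j => c i * c j * k (z i) (z j))).

Definition gram {X : Type} (k : X -> X -> R) (z : nat -> X) : nat -> nat -> R :=
  fun i j => k (z i) (z j).

Definition pos_def (n : nat) (A : nat -> nat -> R) : Prop :=
  forall c : nat -> R, (exists i, (i < n)%nat /\ c i <> 0) ->
    0 < sumR n (fun i => sumR n (fun j => c i * A i j * c j)).

(* lam_0 >= ... >= lam_{n-1} are the eigenvalues of the n x n matrix A, with
   orthonormal eigenvectors v_j = (V 0 j, ..., V (n-1) j). *)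
Definition sorted_eigendecomp (n : nat) (A : nat -> nat -> R)
  (lam : nat -> R) (V : nat -> nat -> R) : Prop :=
  (forall i j, (i < n)%nat -> (j < n)%nat ->
     sumR n (fun k => V k i * V k j) = if Nat.eqb i j then 1 else 0) /\
  (forall i j, (i < n)%nat -> (j < n)%nat ->
     sumR n (fun k => A i k * V k j) = lam j * V i j) /\
  (forall i j, (i <= j)%nat -> (j < n)%nat -> lam j <= lam i).

From Stdlib Require Import Reals Lia Lra Classical.
From mathcomp Require all_boot all_algebra Rstruct.
Open Scope R_scope.

(* Let T = L_N - L_m.  The eigenfunctions phi_k of L_N (eigenvalues lam_k/N)
   form an orthonormal basis of the span of the kernel sections kappa(x_i,.),
   which contains the range of T because every sample point xh_j is one of the
   x_i; hence eps^2 = ||T||_HS^2 = sum_k ||T phi_k||^2 dominates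
   sum_j ||T u_j||^2 for any orthonormal family (u_j).
   The sin-theta theorem for one vector says: if L e = alpha e + t and L has
   Rayleigh quotient <= gamma on the orthogonal complement of an orthonormal
   eigenfamily psi, then (alpha - gamma)^2 ||e - P_psi e||^2 <= ||t||^2.
   According to whether the r-th Nystrom eigenvalue lies above or below the
   midpoint of the gap, we apply it to (L_N, phi) with the vectors phih_j, or
   to (L_m, phih) with the vectors phi_k, and obtain
   (Delta/2)^2 ||sin Theta||_F^2 <= eps^2.  Finally ||H_r - Hh_r|| <=
   2 ||sin Theta||_F, and elementary arithmetic gives the stated bounds. *)

(* A real square matrix with orthonormal columns also has orthonormal rows
   (A^T A = 1 forces A A^T = 1); needed to expand a kernel section in the
   eigenfunctions. *)
Module OrthogonalMatrix.
Import all_boot all_algebra Rstruct.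
Import GRing.Theory.
Local Open Scope ring_scope.

Lemma sumR_big n (f : nat -> R) : sumR n f = \sum_(i < n) f i.
Proof.
elim: n => [|n IH] /=; first by rewrite big_ord0.
by rewrite big_ord_recr /= IH.
Qed.

Lemma rows_orthonormal (n : nat) (V : nat -> nat -> R) :
  (forall i j, (i < n)%coq_nat -> (j < n)%coq_nat ->
     sumR n (fun k => V k i * V k j) = if Nat.eqb i j then 1 else 0) ->
  forall i j, (i < n)%coq_nat -> (j < n)%coq_nat ->
     sumR n (fun k => V i k * V j k) = if Nat.eqb i j then 1 else 0.
Proof.
move=> Hcols i j hi hj.
pose A : 'M[R]_n := \matrix_(a < n, b < n) V a b.
have AtA : A^T *m A = 1%:M.
  apply/matrixP => a b; rewrite !mxE.
  have := Hcols a b (ltP (ltn_ord a)) (ltP (ltn_ord b)).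
  rewrite sumR_big => Hab.
  transitivity (\sum_(k < n) V k a * V k b).
    by apply: eq_bigr => k _; rewrite !mxE.
  rewrite Hab; case: (Nat.eqb_spec a b) => [/val_inj ->|ne]; first by rewrite eqxx.
  by case: eqP => // ab; case: ne; rewrite ab.
pose a := Ordinal (introT ltP hi); pose b := Ordinal (introT ltP hj).
have := f_equal (fun M : 'M[R]_n => M a b) (mulmx1C AtA).
rewrite /= !mxE => Hab.
have -> : sumR n (fun k => V i k * V j k) = \sum_(k < n) A a k * A^T k b.
  by rewrite sumR_big; apply: eq_bigr => k _; rewrite !mxE.
rewrite Hab; case: (Nat.eqb_spec i j) => ne.
  by have -> : (a == b) = true by apply/eqP; apply: val_inj; exact ne.
by have -> : (a == b) = false by apply/eqP => h; apply: ne; exact (f_equal val h).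
Qed.
End OrthogonalMatrix.

Lemma sumR_ext n f g : (forall i, (i < n)%nat -> f i = g i) -> sumR n f = sumR n g.
Proof.
  induction n as [|n IH]; intros H; simpl; [reflexivity|].
  rewrite IH by (intros; apply H; lia). rewrite (H n) by lia. reflexivity.
Qed.

Lemma sumR_plus n f g : sumR n (fun i => f i + g i) = sumR n f + sumR n g.
Proof. induction n as [|n IH]; simpl; [ring|rewrite IH; ring]. Qed.

Lemma sumR_minus n f g : sumR n (fun i => f i - g i) = sumR n f - sumR n g.
Proof. induction n as [|n IH]; simpl; [ring|rewrite IH; ring]. Qed.

Lemma sumR_mult_l n c f : sumR n (fun i => c * f i) = c * sumR n f.
Proof. induction n as [|n IH]; simpl; [ring|rewrite IH; ring]. Qed.

Lemma sumR_mult_r n c f : sumR n (fun i => f i * c) = sumR n f * c.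
Proof. induction n as [|n IH]; simpl; [ring|rewrite IH; ring]. Qed.

Lemma sumR_zero n : sumR n (fun _ => 0) = 0.
Proof. induction n as [|n IH]; simpl; [ring|rewrite IH; ring]. Qed.

Lemma sumR_swap n m f :
  sumR n (fun i => sumR m (fun j => f i j)) = sumR m (fun j => sumR n (fun i => f i j)).
Proof.
  induction n as [|n IH]; simpl.
  - rewrite sumR_zero. reflexivity.
  - rewrite IH, <- sumR_plus. reflexivity.
Qed.

Lemma sumR_le n f g : (forall i, (i < n)%nat -> f i <= g i) -> sumR n f <= sumR n g.
Proof.
  induction n as [|n IH]; intros H; simpl; [lra|].
  apply Rplus_le_compat; [apply IH; intros; apply H; lia| apply H; lia].
Qed.

Lemma sumR_nonneg n f : (forall i, (i < n)%nat -> 0 <= f i) -> 0 <= sumR n f.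
Proof. intros H. rewrite <- (sumR_zero n). apply sumR_le. exact H. Qed.

Lemma sumR_mono n m f : (n <= m)%nat -> (forall i, (i < m)%nat -> 0 <= f i) ->
  sumR n f <= sumR m f.
Proof.
  intros Hnm H. induction Hnm as [|m Hnm IH]; [lra|].
  simpl. assert (0 <= f m) by (apply H; lia).
  assert (sumR n f <= sumR m f) by (apply IH; intros; apply H; lia). lra.
Qed.

Lemma sumR_single n f j : (j < n)%nat -> (forall l, (l < n)%nat -> l <> j -> f l = 0) ->
  sumR n f = f j.
Proof.
  induction n as [|n IH]; intros Hj H; [lia|]. simpl.
  destruct (Nat.eq_dec j n) as [->|ne].
  - rewrite (sumR_ext n f (fun _ => 0)) by (intros; apply H; lia).
    rewrite sumR_zero. ring.
  - rewrite IH by (try lia; intros; apply H; lia). rewrite (H n) by lia. ring.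
Qed.

Lemma sumR_kronecker n f j : (j < n)%nat ->
  sumR n (fun k => f k * (if Nat.eqb j k then 1 else 0)) = f j.
Proof.
  intros Hj. rewrite (sumR_single n _ j Hj).
  - rewrite Nat.eqb_refl. ring.
  - intros l _ ne. apply not_eq_sym, Nat.eqb_neq in ne. rewrite ne. ring.
Qed.

Lemma sumR_sq n f : (sumR n f)^2 = sumR n (fun j => sumR n (fun l => f j * f l)).
Proof.
  rewrite (sumR_ext n (fun j => sumR n (fun l => f j * f l)) (fun j => f j * sumR n f)).
  - rewrite sumR_mult_r. ring.
  - intros. apply sumR_mult_l.
Qed.

(* A nonnegative quadratic polynomial has nonpositive discriminant; the common
   core of both Cauchy-Schwarz inequalities. *)
Lemma quad_disc (A B C : R) : 0 <= A -> (forall t, 0 <= A * t^2 + 2 * B * t + C) -> B^2 <= A * C.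
Proof.
  intros HA H. destruct (Req_dec A 0) as [A0|A0].
  - subst A. destruct (Req_dec B 0) as [B0|B0]; [subst; nra|].
    specialize (H (-(C+1)/(2*B))). exfalso.
    replace (0 * (- (C + 1) / (2 * B)) ^ 2 + 2 * B * (- (C + 1) / (2 * B)) + C) with (-1) in H
      by (field; exact B0). lra.
  - specialize (H (-B/A)).
    replace (A * (- B / A) ^ 2 + 2 * B * (- B / A) + C) with (C - B^2/A) in H by (field; exact A0).
    assert (HApos : 0 < A) by lra.
    assert (HBA : A * (B^2/A) <= A * C) by (apply Rmult_le_compat_l; lra).
    replace (A * (B^2/A)) with (B^2) in HBA by (field; lra). exact HBA.
Qed.

Lemma sumR_CS n f g :
  (sumR n (fun i => f i * g i))^2 <= sumR n (fun i => f i ^2) * sumR n (fun i => g i ^2).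
Proof.
  apply quad_disc.
  - apply sumR_nonneg. intros. nra.
  - intros t.
    assert (Hexp : sumR n (fun i => f i ^ 2) * t ^ 2 + 2 * sumR n (fun i => f i * g i) * t +
      sumR n (fun i => g i ^ 2) = sumR n (fun i => (f i * t + g i)^2)).
    { rewrite (sumR_ext n (fun i => (f i * t + g i)^2)
        (fun i => (t^2 * f i ^2 + (2*t) * (f i * g i)) + g i ^2)) by (intros; ring).
      rewrite !sumR_plus, !sumR_mult_l. ring. }
    rewrite Hexp. apply sumR_nonneg. intros. apply pow2_ge_0.
Qed.

Section InnerProduct.
Variable E : InnerProductSpace.
Implicit Types u v w f g h : E.

Lemma inner_add_r u v w : inner u (vadd v w) = inner u v + inner u w.
Proof. rewrite inner_sym, inner_add_l, (inner_sym _ v), (inner_sym _ w). reflexivity. Qed.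

Lemma inner_scal_r a u v : inner u (vscal a v) = a * inner u v.
Proof. rewrite inner_sym, inner_scal_l, inner_sym. reflexivity. Qed.

Lemma inner_zero_l h : inner (@vzero E) h = 0.
Proof.
  assert (H : inner (@vzero E) h = inner (vadd vzero vzero) h) by (rewrite vadd_0; reflexivity).
  rewrite inner_add_l in H. lra.
Qed.

Lemma inner_zero_r h : inner h (@vzero E) = 0.
Proof. rewrite inner_sym. apply inner_zero_l. Qed.

Lemma inner_vsum_l n (g : nat -> E) h : inner (vsum n g) h = sumR n (fun i => inner (g i) h).
Proof.
  induction n as [|n IH]; simpl; [apply inner_zero_l|].
  rewrite inner_add_l, IH. reflexivity.
Qed.

Lemma inner_vsub_l u v h : inner (vsub u v) h = inner u h - inner v h.
Proof. unfold vsub. rewrite inner_add_l, inner_scal_l. ring. Qed.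

Lemma inner_vsub_r u v h : inner h (vsub u v) = inner h u - inner h v.
Proof. rewrite inner_sym, inner_vsub_l, !(inner_sym _ h). reflexivity. Qed.

Lemma inner_lin_l n (c : nat -> R) (g : nat -> E) h :
  inner (vsum n (fun i => vscal (c i) (g i))) h = sumR n (fun i => c i * inner (g i) h).
Proof. rewrite inner_vsum_l. apply sumR_ext. intros. apply inner_scal_l. Qed.

Lemma inner_lin_r n (c : nat -> R) (g : nat -> E) h :
  inner h (vsum n (fun i => vscal (c i) (g i))) = sumR n (fun i => c i * inner h (g i)).
Proof.
  rewrite inner_sym, inner_lin_l. apply sumR_ext. intros. rewrite inner_sym. reflexivity.
Qed.

Lemma inner_CS u v : (inner u v)^2 <= inner u u * inner v v.
Proof.
  apply quad_disc; [apply inner_pos|]. intros t.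
  pose proof (inner_pos _ (vadd (vscal t u) v)) as H.
  rewrite inner_add_l, !inner_add_r, !inner_scal_l, !inner_scal_r, (inner_sym _ v u) in H.
  nra.
Qed.

Lemma orth_comb_sq n (c : nat -> R) (hh : nat -> E) u :
  (forall j l, (j < n)%nat -> (l < n)%nat -> j <> l -> inner (hh j) (hh l) = 0) ->
  let y := vsub u (vsum n (fun j => vscal (c j) (hh j))) in
  inner y y = inner u u - 2 * sumR n (fun j => c j * inner (hh j) u)
              + sumR n (fun j => c j ^ 2 * inner (hh j) (hh j)).
Proof.
  intros Horth y. unfold y.
  rewrite inner_vsub_l, !inner_vsub_r, !inner_lin_l.
  rewrite (sumR_ext n (fun i => c i * inner (hh i) (vsum n (fun j => vscal (c j) (hh j))))
            (fun i => c i ^ 2 * inner (hh i) (hh i))).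
  - rewrite inner_lin_r.
    rewrite (sumR_ext n (fun j => c j * inner u (hh j)) (fun j => c j * inner (hh j) u))
      by (intros; rewrite inner_sym; reflexivity). ring.
  - intros i Hi. rewrite inner_lin_r, (sumR_single n _ i Hi).
    + ring.
    + intros l Hl ne. rewrite Horth by auto. ring.
Qed.

Lemma bessel_orth n (hh : nat -> E) (M : R) w :
  0 < M ->
  (forall j l, (j < n)%nat -> (l < n)%nat -> j <> l -> inner (hh j) (hh l) = 0) ->
  (forall j, (j < n)%nat -> inner (hh j) (hh j) <= M) ->
  sumR n (fun j => (inner (hh j) w)^2) <= M * inner w w.
Proof.
  intros HM Horth Hb.
  pose proof (orth_comb_sq n (fun j => inner (hh j) w / M) hh w Horth) as H. cbv zeta in H.
  pose proof (inner_pos _ (vsub w (vsum n (fun j => vscal (inner (hh j) w / M) (hh j))))) as P.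
  rewrite H in P. clear H.
  set (S := sumR n (fun j => (inner (hh j) w)^2)).
  assert (E1 : sumR n (fun j => inner (hh j) w / M * inner (hh j) w) = S / M).
  { unfold S, Rdiv. rewrite <- sumR_mult_r. apply sumR_ext. intros. ring. }
  assert (E2 : sumR n (fun j => (inner (hh j) w / M) ^ 2 * inner (hh j) (hh j)) <= S / M).
  { unfold S, Rdiv at 2. rewrite <- sumR_mult_r. apply sumR_le. intros j Hj.
    specialize (Hb j Hj).
    assert (0 <= (inner (hh j) w)^2) by apply pow2_ge_0.
    replace ((inner (hh j) w / M) ^ 2 * inner (hh j) (hh j)) with
      ((inner (hh j) w)^2 * / M * (inner (hh j) (hh j) / M)) by (field; lra).
    rewrite <- (Rmult_1_r ((inner (hh j) w)^2 * / M)) at 2.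
    apply Rmult_le_compat_l.
    - apply Rmult_le_pos; [lra| left; apply Rinv_0_lt_compat; lra].
    - apply (Rmult_le_reg_r M); [lra|]. unfold Rdiv. rewrite Rmult_assoc, Rinv_l; lra. }
  rewrite E1 in P.
  assert (HSM : M * (S / M) <= M * inner w w) by (apply Rmult_le_compat_l; lra).
  replace (M * (S / M)) with S in HSM by (field; lra). exact HSM.
Qed.

Definition onr (r : nat) (e : nat -> E) : Prop :=
  forall j l, (j < r)%nat -> (l < r)%nat -> inner (e j) (e l) = if Nat.eqb j l then 1 else 0.

Definition resid (r : nat) (psi : nat -> E) (u : E) : E :=
  vsub u (vsum r (fun j => vscal (inner (psi j) u) (psi j))).

(* ||sin Theta||_F^2 between the spans of two orthonormal r-families. *)
Definition sin_theta_sq (r : nat) (psi e : nat -> E) : R :=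
  sumR r (fun k => inner (resid r psi (e k)) (resid r psi (e k))).

Lemma resid_norm r psi u : onr r psi ->
  inner (resid r psi u) (resid r psi u) = inner u u - sumR r (fun j => (inner (psi j) u)^2).
Proof.
  intros Hon. unfold resid. rewrite orth_comb_sq.
  - rewrite (sumR_ext r (fun j => inner (psi j) u ^ 2 * inner (psi j) (psi j))
                        (fun j => (inner (psi j) u)^2)).
    + rewrite (sumR_ext r (fun j => inner (psi j) u * inner (psi j) u)
                          (fun j => (inner (psi j) u)^2)) by (intros; ring). ring.
    + intros j Hj. rewrite Hon, Nat.eqb_refl by auto. ring.
  - intros j l Hj Hl ne. rewrite Hon by auto. apply Nat.eqb_neq in ne. rewrite ne. reflexivity.
Qed.

Lemma resid_orth r psi u j : onr r psi -> (j < r)%nat -> inner (psi j) (resid r psi u) = 0.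
Proof.
  intros Hon Hj. unfold resid. rewrite inner_vsub_r, inner_lin_r.
  rewrite (sumR_ext r _ (fun l => inner (psi l) u * (if Nat.eqb j l then 1 else 0)))
    by (intros; rewrite Hon by auto; reflexivity).
  rewrite sumR_kronecker by auto. ring.
Qed.

Lemma bessel_on n (e : nat -> E) u : onr n e ->
  sumR n (fun j => (inner (e j) u)^2) <= inner u u.
Proof.
  intros Hon. pose proof (resid_norm n e u Hon) as H.
  pose proof (inner_pos _ (resid n e u)). lra.
Qed.

Lemma sin_theta_sq_sym r (e psi : nat -> E) : onr r e -> onr r psi ->
  sin_theta_sq r psi e = sin_theta_sq r e psi.
Proof.
  intros He Hp. unfold sin_theta_sq.
  rewrite (sumR_ext r _ (fun k => 1 - sumR r (fun j => (inner (psi j) (e k))^2))).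
  - rewrite (sumR_ext r (fun j => inner (resid r e (psi j)) (resid r e (psi j)))
                        (fun j => 1 - sumR r (fun k => (inner (psi j) (e k))^2))).
    + rewrite !sumR_minus, sumR_swap. reflexivity.
    + intros j Hj. rewrite resid_norm, Hp, Nat.eqb_refl by auto. f_equal.
      apply sumR_ext. intros. rewrite inner_sym. reflexivity.
  - intros k Hk. rewrite resid_norm, He, Nat.eqb_refl by auto. reflexivity.
Qed.

Lemma sin_theta_sq_nonneg r (psi e : nat -> E) : 0 <= sin_theta_sq r psi e.
Proof. apply sumR_nonneg. intros. apply inner_pos. Qed.

Lemma proj_form (e : nat -> E) r (f h : E) :
  inner (proj_op e r f) h = sumR r (fun i => inner (e i) f * inner (e i) h).
Proof. unfold proj_op. apply inner_lin_l. Qed.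

Lemma proj_diff_split r (e psi : nat -> E) f h :
  inner (vsub (proj_op e r f) (proj_op psi r f)) h =
  inner (vsum r (fun k => vscal (inner (resid r psi (e k)) f) (e k))) h -
  inner (vsum r (fun j => vscal (inner (psi j) f) (resid r e (psi j)))) h.
Proof.
  rewrite inner_vsub_l, !proj_form, !inner_lin_l. unfold resid.
  rewrite (sumR_ext r (fun i => inner (vsub (e i) (vsum r (fun j => vscal (inner (psi j) (e i)) (psi j)))) f * inner (e i) h)
    (fun i => inner (e i) f * inner (e i) h - sumR r (fun j => inner (psi j) (e i) * inner (psi j) f * inner (e i) h))).
  2:{ intros i Hi. rewrite inner_vsub_l, inner_lin_l, Rmult_minus_distr_r, <- sumR_mult_r. reflexivity. }
  rewrite (sumR_ext r (fun i => inner (psi i) f * inner (vsub (psi i) (vsum r (fun j => vscal (inner (e j) (psi i)) (e j)))) h)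
    (fun i => inner (psi i) f * inner (psi i) h - sumR r (fun j => inner (psi i) f * inner (e j) (psi i) * inner (e j) h))).
  2:{ intros i Hi. rewrite inner_vsub_l, inner_lin_l, Rmult_minus_distr_l, <- sumR_mult_l.
      f_equal. apply sumR_ext. intros. ring. }
  rewrite !sumR_minus, (sumR_swap r r (fun i j => inner (psi i) f * inner (e j) (psi i) * inner (e j) h)).
  rewrite (sumR_ext r (fun j => sumR r (fun i => inner (psi i) f * inner (e j) (psi i) * inner (e j) h))
    (fun i => sumR r (fun j => inner (psi j) (e i) * inner (psi j) f * inner (e i) h))).
  - ring.
  - intros. apply sumR_ext. intros. rewrite (inner_sym _ (e _)). ring.
Qed.

Lemma proj_diff_left_bound r (e psi : nat -> E) f : onr r e ->
  let Xv := vsum r (fun k => vscal (inner (resid r psi (e k)) f) (e k)) in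
  inner Xv Xv <= sin_theta_sq r psi e * inner f f.
Proof.
  intros He Xv.
  assert (HXX : inner Xv Xv = sumR r (fun k => (inner (resid r psi (e k)) f)^2)).
  { unfold Xv at 1. rewrite inner_lin_l. apply sumR_ext. intros k Hk.
    unfold Xv. rewrite inner_lin_r.
    rewrite (sumR_ext r _ (fun l => inner (resid r psi (e l)) f * (if Nat.eqb k l then 1 else 0)))
      by (intros; rewrite He by auto; ring).
    rewrite sumR_kronecker by auto. ring. }
  rewrite HXX. unfold sin_theta_sq. rewrite <- sumR_mult_r. apply sumR_le. intros.
  apply inner_CS.
Qed.

(* ||Y f||^2 <= ||sin Theta||_F^2 ||f||^2 (Cauchy-Schwarz in the sum, Bessel). *)
Lemma proj_diff_right_bound r (e psi : nat -> E) f : onr r psi ->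
  let Yv := vsum r (fun j => vscal (inner (psi j) f) (resid r e (psi j))) in
  inner Yv Yv <= sin_theta_sq r e psi * inner f f.
Proof.
  intros Hp Yv. set (F := sin_theta_sq r e psi).
  assert (HYY : inner Yv Yv = sumR r (fun j => inner (psi j) f * inner (resid r e (psi j)) Yv))
    by (unfold Yv at 1; apply inner_lin_l).
  pose proof (sumR_CS r (fun j => inner (psi j) f) (fun j => inner (resid r e (psi j)) Yv)) as CS.
  cbv beta in CS. rewrite <- HYY in CS.
  assert (B1 : sumR r (fun j => (inner (psi j) f)^2) <= inner f f) by (apply bessel_on; exact Hp).
  assert (B2 : sumR r (fun j => (inner (resid r e (psi j)) Yv)^2) <= F * inner Yv Yv).
  { unfold F, sin_theta_sq. rewrite <- sumR_mult_r. apply sumR_le. intros. apply inner_CS. }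
  pose proof (inner_pos _ Yv) as PY. pose proof (inner_pos _ f) as Pf.
  assert (B3 : 0 <= sumR r (fun j => (inner (resid r e (psi j)) Yv)^2))
    by (apply sumR_nonneg; intros; apply pow2_ge_0).
  assert (B4 : (inner Yv Yv)^2 <= inner f f * (F * inner Yv Yv)).
  { apply (Rle_trans _ _ _ CS). apply Rmult_le_compat; try lra.
    apply sumR_nonneg; intros; apply pow2_ge_0. }
  destruct (Req_dec (inner Yv Yv) 0) as [Z|NZ].
  - rewrite Z. apply Rmult_le_pos; [apply sin_theta_sq_nonneg | exact Pf].
  - apply (Rmult_le_reg_r (inner Yv Yv)); [lra|]. nra.
Qed.

Lemma proj_diff_bound r (e psi : nat -> E) f : onr r e -> onr r psi ->
  let D := vsub (proj_op e r f) (proj_op psi r f) in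
  inner D D <= 4 * sin_theta_sq r psi e * inner f f.
Proof.
  intros He Hp D.
  set (Xv := vsum r (fun k => vscal (inner (resid r psi (e k)) f) (e k))).
  set (Yv := vsum r (fun j => vscal (inner (psi j) f) (resid r e (psi j)))).
  set (F := sin_theta_sq r psi e).
  assert (HD : forall h, inner D h = inner Xv h - inner Yv h) by (intros; apply proj_diff_split).
  assert (HX : inner Xv Xv <= F * inner f f) by (apply proj_diff_left_bound; exact He).
  assert (HY : inner Yv Yv <= F * inner f f).
  { unfold F. rewrite sin_theta_sq_sym by auto. apply proj_diff_right_bound; exact Hp. }
  assert (HDD : inner D D = inner Xv Xv - 2 * inner Xv Yv + inner Yv Yv).
  { rewrite HD, (inner_sym _ Xv D), (inner_sym _ Yv D), !HD, (inner_sym _ Yv Xv). ring. }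
  pose proof (inner_CS Xv Yv) as CS.
  pose proof (inner_pos _ Xv). pose proof (inner_pos _ Yv).
  pose proof (inner_pos _ f). pose proof (sin_theta_sq_nonneg r psi e).
  assert (HXY : (inner Xv Yv)^2 <= (F * inner f f)^2).
  { apply (Rle_trans _ _ _ CS). replace ((F * inner f f)^2) with ((F * inner f f) * (F * inner f f)) by ring.
    apply Rmult_le_compat; lra. }
  assert (0 <= F * inner f f) by nra.
  assert (- inner Xv Yv <= F * inner f f) by nra.
  rewrite HDD. nra.
Qed.

Lemma norm_le_of_sq (v f : E) (c : R) : 0 <= c -> inner v v <= c ^ 2 * inner f f ->
  norm v <= c * norm f.
Proof.
  intros Hc Hvf. unfold norm.
  rewrite <- (sqrt_pow2 c Hc), <- sqrt_mult_alt by apply pow2_ge_0.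
  apply sqrt_le_1_alt. exact Hvf.
Qed.

End InnerProduct.

Arguments onr {E}. Arguments resid {E}. Arguments sin_theta_sq {E}.

Section KernelOperator.
Variables (E : InnerProductSpace) (X : Type) (Phi : X -> E).

Lemma L_form n z (f h : E) :
  inner (L_op Phi n z f) h = / INR n * sumR n (fun i => inner f (Phi (z i)) * inner (Phi (z i)) h).
Proof.
  unfold L_op. rewrite inner_scal_l, inner_vsum_l. f_equal. apply sumR_ext. intros.
  apply inner_scal_l.
Qed.

Lemma L_quad n z w :
  inner (L_op Phi n z w) w = / INR n * sumR n (fun i => (inner w (Phi (z i)))^2).
Proof.
  rewrite L_form. f_equal. apply sumR_ext. intros. rewrite (inner_sym _ (Phi _)). ring.
Qed.

Lemma L_sym n z u v : inner (L_op Phi n z u) v = inner (L_op Phi n z v) u.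
Proof.
  rewrite !L_form. f_equal. apply sumR_ext. intros. rewrite !(inner_sym _ (Phi _)). ring.
Qed.

Lemma L_lin_form n z r (psi : nat -> E) d u h :
  inner (L_op Phi n z (vsub u (vsum r (fun j => vscal (d j) (psi j))))) h =
  inner (L_op Phi n z u) h - sumR r (fun j => d j * inner (L_op Phi n z (psi j)) h).
Proof.
  rewrite !L_form.
  rewrite (sumR_ext r _ (fun j => / INR n * (d j * sumR n (fun i => inner (psi j) (Phi (z i)) * inner (Phi (z i)) h))))
    by (intros; rewrite L_form; ring).
  rewrite sumR_mult_l.
  rewrite (sumR_ext n _ (fun i => inner u (Phi (z i)) * inner (Phi (z i)) h - sumR r (fun j => d j * inner (psi j) (Phi (z i)) * inner (Phi (z i)) h))).
  2:{ intros i Hi. rewrite inner_vsub_l, inner_lin_l, Rmult_minus_distr_r, <- sumR_mult_r.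
      reflexivity. }
  rewrite sumR_minus, sumR_swap.
  rewrite (sumR_ext r (fun j => sumR n (fun i => d j * inner (psi j) (Phi (z i)) * inner (Phi (z i)) h))
     (fun j => d j * sumR n (fun i => inner (psi j) (Phi (z i)) * inner (Phi (z i)) h))).
  - ring.
  - intros. rewrite <- sumR_mult_l. apply sumR_ext. intros. ring.
Qed.

Lemma L_range_expansion (e : nat -> E) K n z :
  (forall i, (i < n)%nat -> forall h,
     inner (Phi (z i)) h = sumR K (fun l => inner (e l) (Phi (z i)) * inner (e l) h)) ->
  forall u h, inner (L_op Phi n z u) h = sumR K (fun l => inner (e l) (L_op Phi n z u) * inner (e l) h).
Proof.
  intros HE u h. rewrite L_form.
  rewrite (sumR_ext K _ (fun l => / INR n * sumR n (fun i => inner u (Phi (z i)) * (inner (Phi (z i)) (e l) * inner (e l) h)))).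
  - rewrite sumR_mult_l, sumR_swap. f_equal. apply sumR_ext. intros i Hi.
    rewrite HE by auto. rewrite <- sumR_mult_l. apply sumR_ext. intros. rewrite (inner_sym _ (e _)). ring.
  - intros l Hl. rewrite inner_sym, L_form, Rmult_assoc, <- sumR_mult_r. f_equal. apply sumR_ext.
    intros. ring.
Qed.

(* If psi is an orthonormal eigenfamily of
   L_n, L_n u = alpha u + t, and the Rayleigh quotient of L_n on psi^perp is at
   most gamma <= alpha - delta, then delta^2 ||u - P_psi u||^2 <= ||t||^2:
   with w = u - P_psi u one gets delta ||w||^2 <= -<t, w> <= ||t|| ||w||. *)
Lemma sin_theta_vector n z r (psi : nat -> E) (c : nat -> R) u alpha t gamma delta :
  onr r psi ->
  (forall j h, (j < r)%nat -> inner (L_op Phi n z (psi j)) h = c j * inner (psi j) h) ->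
  (forall h, inner (L_op Phi n z u) h = alpha * inner u h + inner t h) ->
  (forall w, (forall j, (j < r)%nat -> inner (psi j) w = 0) ->
     inner (L_op Phi n z w) w <= gamma * inner w w) ->
  0 < delta -> delta <= alpha - gamma ->
  delta ^ 2 * inner (resid r psi u) (resid r psi u) <= inner t t.
Proof.
  intros Hon Hc Hu Hcomp Hd Hag.
  set (w := resid r psi u).
  assert (Hw : forall j, (j < r)%nat -> inner (psi j) w = 0) by (intros; apply resid_orth; auto).
  assert (Hww : inner w w = inner u w).
  { unfold w at 1, resid. rewrite inner_vsub_l, inner_lin_l.
    rewrite (sumR_ext r _ (fun _ => 0)) by (intros; rewrite Hw by auto; ring).
    rewrite sumR_zero. ring. }
  assert (HL : inner (L_op Phi n z w) w = alpha * inner w w + inner t w).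
  { unfold w at 1, resid. rewrite L_lin_form, Hu.
    rewrite (sumR_ext r _ (fun _ => 0)) by (intros; rewrite Hc, Hw by auto; ring).
    rewrite sumR_zero, Hww. ring. }
  pose proof (Hcomp w Hw) as Hcw. rewrite HL in Hcw.
  pose proof (inner_pos _ w) as Pw. pose proof (inner_pos _ t) as Pt.
  pose proof (inner_CS _ t w) as CS.
  assert (H1 : delta * inner w w <= - inner t w) by nra.
  destruct (Req_dec (inner w w) 0) as [Z|NZ].
  - rewrite Z. lra.
  - assert (H2 : (delta * inner w w)^2 <= (inner t w)^2).
    { assert (0 <= delta * inner w w) by nra. nra. }
    apply (Rmult_le_reg_r (inner w w)); [lra|]. nra.
Qed.

Lemma sin_theta_family n z r (psi : nat -> E) (c : nat -> R)
    (e : nat -> E) (alpha : nat -> R) (t : nat -> E) gamma delta :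
  onr r psi ->
  (forall j h, (j < r)%nat -> inner (L_op Phi n z (psi j)) h = c j * inner (psi j) h) ->
  (forall k h, (k < r)%nat -> inner (L_op Phi n z (e k)) h = alpha k * inner (e k) h + inner (t k) h) ->
  (forall w, (forall j, (j < r)%nat -> inner (psi j) w = 0) ->
     inner (L_op Phi n z w) w <= gamma * inner w w) ->
  0 < delta -> (forall k, (k < r)%nat -> delta <= alpha k - gamma) ->
  delta ^ 2 * sin_theta_sq r psi e <= sumR r (fun k => inner (t k) (t k)).
Proof.
  intros Hon Hc He Hcomp Hd Hgap. unfold sin_theta_sq. rewrite <- sumR_mult_l.
  apply sumR_le. intros k Hk.
  apply (sin_theta_vector n z r psi c (e k) (alpha k) (t k) gamma delta); auto.
Qed.

End KernelOperator.

Section Eigenfunctions.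
Variables (X : Type) (kappa : X -> X -> R) (E : InnerProductSpace) (Phi : X -> E).
Hypothesis hPhi : forall a b, inner (Phi a) (Phi b) = kappa a b.
Variables (n : nat) (z : nat -> X) (lam : nat -> R) (V : nat -> nat -> R).
Hypothesis Hdec : sorted_eigendecomp n (gram kappa z) lam V.

Local Notation e := (eigfun Phi n z lam V).

Local Notation g j := (vsum n (fun p => vscal (V p j) (Phi (z p)))).

Lemma eig_cols i j : (i < n)%nat -> (j < n)%nat ->
  sumR n (fun k => V k i * V k j) = if Nat.eqb i j then 1 else 0.
Proof. destruct Hdec as [H _]. exact (H i j). Qed.

Lemma eig_rows i j : (i < n)%nat -> (j < n)%nat ->
  sumR n (fun k => V i k * V j k) = if Nat.eqb i j then 1 else 0.
Proof. apply OrthogonalMatrix.rows_orthonormal. exact eig_cols. Qed.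

Lemma gram_eigen i j : (i < n)%nat -> (j < n)%nat ->
  sumR n (fun p => V p j * inner (Phi (z p)) (Phi (z i))) = lam j * V i j.
Proof.
  intros Hi Hj. destruct Hdec as [_ [He _]]. rewrite <- (He i j Hi Hj).
  apply sumR_ext. intros p Hp. unfold gram. rewrite <- hPhi, inner_sym. ring.
Qed.

Lemma g_inner j w : inner (g j) w = sumR n (fun p => V p j * inner (Phi (z p)) w).
Proof. apply inner_lin_l. Qed.

Lemma eigfun_inner j h : inner (e j) h = / sqrt (lam j) * inner (g j) h.
Proof. unfold eigfun. rewrite inner_scal_l. reflexivity. Qed.

Lemma eigfun_at_sample j i : (j < n)%nat -> (i < n)%nat -> 0 < lam j ->
  inner (e j) (Phi (z i)) = sqrt (lam j) * V i j.
Proof.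
  intros Hj Hi Hl. rewrite eigfun_inner, g_inner, gram_eigen by auto.
  pose proof (sqrt_lt_R0 _ Hl). pose proof (sqrt_sqrt (lam j)) as Hs.
  set (s := sqrt (lam j)) in *. rewrite <- Hs by lra. field. lra.
Qed.

Lemma eigfun_orthonormal l j : (l < n)%nat -> (j < n)%nat -> 0 < lam l -> 0 < lam j ->
  inner (e l) (e j) = if Nat.eqb l j then 1 else 0.
Proof.
  intros Hl Hj Pl Pj. rewrite eigfun_inner, g_inner.
  rewrite (sumR_ext n _ (fun p => sqrt (lam j) * (V p l * V p j))).
  - rewrite sumR_mult_l, eig_cols by auto.
    destruct (Nat.eqb_spec l j) as [->|ne].
    + pose proof (sqrt_lt_R0 _ Pj). field. lra.
    + ring.
  - intros p Hp. rewrite inner_sym, eigfun_at_sample by auto. ring.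
Qed.

Lemma L_eigfun j h : (j < n)%nat -> 0 < lam j ->
  inner (L_op Phi n z (e j)) h = lam j / INR n * inner (e j) h.
Proof.
  intros Hj Pj. rewrite L_form, eigfun_inner, g_inner.
  rewrite (sumR_ext n _ (fun i => sqrt (lam j) * (V i j * inner (Phi (z i)) h)))
    by (intros; rewrite eigfun_at_sample by auto; ring).
  rewrite sumR_mult_l.
  pose proof (sqrt_lt_R0 _ Pj). pose proof (sqrt_sqrt (lam j)) as Hs.
  set (s := sqrt (lam j)) in *. rewrite <- Hs by lra. unfold Rdiv.
  assert (Hn : INR n <> 0) by (apply not_0_INR; lia).
  field. repeat split; first [exact Hn | lra].
Qed.

(* Phi(z_i) = sum_j V_ij g_j, by orthonormality of the rows of V. *)
Lemma sample_in_g i h : (i < n)%nat ->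
  inner (Phi (z i)) h = sumR n (fun j => V i j * inner (g j) h).
Proof.
  intros Hi.
  rewrite (sumR_ext n _ (fun j => sumR n (fun p => V i j * V p j * inner (Phi (z p)) h))).
  - rewrite sumR_swap.
    rewrite (sumR_ext n _ (fun p => inner (Phi (z p)) h * (if Nat.eqb i p then 1 else 0))).
    + rewrite sumR_kronecker by auto. reflexivity.
    + intros p Hp. rewrite <- (eig_rows i p Hi Hp), <- sumR_mult_l. apply sumR_ext. intros. ring.
  - intros j Hj. rewrite g_inner, <- sumR_mult_l. apply sumR_ext. intros. ring.
Qed.

Lemma sample_expansion i h : (forall l, (l < n)%nat -> 0 < lam l) -> (i < n)%nat ->
  inner (Phi (z i)) h = sumR n (fun l => inner (e l) (Phi (z i)) * inner (e l) h).
Proof.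
  intros Hp Hi. rewrite sample_in_g by auto. apply sumR_ext. intros l Hl.
  rewrite eigfun_at_sample, eigfun_inner by auto. specialize (Hp l Hl). pose proof (sqrt_lt_R0 _ Hp).
  field. lra.
Qed.

Lemma g_orth l j : (l < n)%nat -> (j < n)%nat ->
  inner (g l) (g j) = lam j * (if Nat.eqb l j then 1 else 0).
Proof.
  intros Hl Hj. rewrite g_inner.
  rewrite (sumR_ext n _ (fun p => lam j * (V p l * V p j))).
  - rewrite sumR_mult_l, eig_cols by auto. reflexivity.
  - intros p Hp. rewrite inner_lin_r.
    rewrite (sumR_ext n _ (fun q => V q j * inner (Phi (z q)) (Phi (z p))))
      by (intros; rewrite inner_sym; reflexivity).
    rewrite gram_eigen by auto. ring.
Qed.

(* n <L_n w, w> = sum_i <w, Phi(z_i)>^2 = sum_j <g_j, w>^2 (V is orthogonal). *)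
Lemma sample_energy w : sumR n (fun i => (inner w (Phi (z i)))^2) = sumR n (fun j => (inner (g j) w)^2).
Proof.
  rewrite (sumR_ext n _ (fun i => (sumR n (fun j => V i j * inner (g j) w))^2)).
  2:{ intros i Hi. rewrite inner_sym, sample_in_g by auto. reflexivity. }
  rewrite (sumR_ext n _ (fun i => sumR n (fun j => sumR n (fun l => V i j * inner (g j) w * (V i l * inner (g l) w)))))
    by (intros; apply sumR_sq).
  rewrite sumR_swap. apply sumR_ext. intros j Hj. rewrite sumR_swap.
  rewrite (sumR_ext n _ (fun l => inner (g j) w * inner (g l) w * (if Nat.eqb j l then 1 else 0))).
  - rewrite (sumR_kronecker n (fun l => inner (g j) w * inner (g l) w) j Hj). ring.
  - intros l Hl. rewrite <- (eig_cols j l Hj Hl), <- sumR_mult_l. apply sumR_ext. intros. ring.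
Qed.

Lemma L_rayleigh_tail r M w : (0 < n)%nat -> 0 < M ->
  (forall j, (j < n)%nat -> (r <= j)%nat -> lam j <= M) ->
  (forall j, (j < n)%nat -> (j < r)%nat -> 0 < lam j) ->
  (forall j, (j < r)%nat -> inner (e j) w = 0) ->
  inner (L_op Phi n z w) w <= M / INR n * inner w w.
Proof.
  intros Hn HM Hb Hp Ho.
  assert (Htail : sumR n (fun i => (inner w (Phi (z i)))^2) <= M * inner w w).
  { rewrite sample_energy.
    set (hh := fun j => if Nat.ltb j r then vzero else g j).
    rewrite (sumR_ext n _ (fun j => (inner (hh j) w)^2)).
    - apply bessel_orth; auto.
      + intros j l Hj Hl ne. unfold hh.
        destruct (Nat.ltb j r); [apply inner_zero_l|].
        destruct (Nat.ltb l r); [apply inner_zero_r|].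
        rewrite g_orth by auto. apply Nat.eqb_neq in ne. rewrite ne. ring.
      + intros j Hj. unfold hh. destruct (Nat.ltb_spec j r).
        * rewrite inner_zero_l. lra.
        * rewrite g_orth, Nat.eqb_refl by auto. rewrite Rmult_1_r. apply Hb; auto.
    - intros j Hj. unfold hh. destruct (Nat.ltb_spec j r) as [Hjr|]; [|reflexivity].
      rewrite inner_zero_l.
      pose proof (Ho j Hjr) as Hej. rewrite eigfun_inner in Hej.
      pose proof (sqrt_lt_R0 _ (Hp j Hj Hjr)).
      assert (Hg : inner (g j) w = 0).
      { apply (Rmult_eq_reg_l (/ sqrt (lam j))); [rewrite Hej; ring|].
        apply Rinv_neq_0_compat. lra. }
      rewrite Hg. ring. }
  rewrite L_quad. unfold Rdiv. rewrite (Rmult_comm M), Rmult_assoc.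
  apply Rmult_le_compat_l; [left; apply Rinv_0_lt_compat, lt_0_INR; lia | exact Htail].
Qed.

Lemma eigenvalue_pos j : pos_def n (gram kappa z) -> (j < n)%nat -> 0 < lam j.
Proof.
  intros Hpd Hj.
  assert (Hex : exists i, (i < n)%nat /\ V i j <> 0).
  { apply NNPP. intros Hno.
    pose proof (eig_cols j j Hj Hj) as H1. rewrite Nat.eqb_refl in H1.
    rewrite (sumR_ext n _ (fun _ => 0)) in H1.
    - rewrite sumR_zero in H1. lra.
    - intros k Hk. destruct (Req_dec (V k j) 0) as [->|ne]; [ring|].
      exfalso. apply Hno. exists k. auto. }
  specialize (Hpd (fun i => V i j) Hex). simpl in Hpd.
  destruct Hdec as [_ [He _]].
  rewrite (sumR_ext n _ (fun i => lam j * (V i j * V i j))) in Hpd.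
  - rewrite sumR_mult_l, eig_cols, Nat.eqb_refl in Hpd by auto. lra.
  - intros i Hi. rewrite <- (Rmult_assoc (lam j)), (Rmult_comm (lam j)), Rmult_assoc, <- (He i j Hi Hj).
    rewrite <- sumR_mult_l. apply sumR_ext. intros. ring.
Qed.

End Eigenfunctions.

Definition L_diff {E : InnerProductSpace} {X : Type} (Phi : X -> E)
  (n : nat) (z : nat -> X) (n' : nat) (z' : nat -> X) (f : E) : E :=
  vsub (L_op Phi n z f) (L_op Phi n' z' f).

(* Setting of theorem5: x is the data set, xh the Nystrom sample, phi and
   phih the eigenfunctions of L_N and L_m, T = L_N - L_m. *)
Section GapEstimate.
Variables (X : Type) (kappa : X -> X -> R) (E : InnerProductSpace) (Phi : X -> E).
Hypothesis hPhi : forall a b, inner (Phi a) (Phi b) = kappa a b.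
Variables (N m r : nat) (x xh : nat -> X).
Variables (lam : nat -> R) (V : nat -> nat -> R) (lamh : nat -> R) (U : nat -> nat -> R).
Hypothesis Hpd : pos_def N (gram kappa x).
Hypothesis HdecA : sorted_eigendecomp N (gram kappa x) lam V.
Hypothesis Hsub : forall j, (j < m)%nat -> exists i, (i < N)%nat /\ xh j = x i.
Hypothesis HdecB : sorted_eigendecomp m (gram kappa xh) lamh U.
Hypotheses (Hr1 : (1 <= r)%nat) (HrN : (r < N)%nat) (Hrm : (r <= m)%nat).
Hypothesis Hlr : 0 < lamh (r - 1)%nat.

Local Notation phi := (eigfun Phi N x lam V).
Local Notation phih := (eigfun Phi m xh lamh U).
Local Notation T := (L_diff Phi N x m xh).
Local Notation eps := (hs_norm phi N T).
Local Notation Delta := ((lam (r - 1)%nat - lam r) / INR N).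

Lemma lam_pos k : (k < N)%nat -> 0 < lam k.
Proof. intros Hk. exact (eigenvalue_pos X kappa N x lam V HdecA k Hpd Hk). Qed.

Lemma lam_decr i j : (i <= j)%nat -> (j < N)%nat -> lam j <= lam i.
Proof. destruct HdecA as [_ [_ H]]. exact (H i j). Qed.

Lemma lamh_decr i j : (i <= j)%nat -> (j < m)%nat -> lamh j <= lamh i.
Proof. destruct HdecB as [_ [_ H]]. exact (H i j). Qed.

Lemma lamh_pos j : (j < r)%nat -> 0 < lamh j.
Proof. intros Hj. apply Rlt_le_trans with (lamh (r - 1)%nat); auto. apply lamh_decr; lia. Qed.

Lemma phi_onr : onr r phi.
Proof.
  intros j l Hj Hl. apply (eigfun_orthonormal X kappa E Phi hPhi N x lam V HdecA); try lia;
  apply lam_pos; lia.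
Qed.

Lemma phih_onr : onr r phih.
Proof.
  intros j l Hj Hl. apply (eigfun_orthonormal X kappa E Phi hPhi m xh lamh U HdecB); try lia;
  apply lamh_pos; lia.
Qed.

Lemma T_sym u v : inner (T u) v = inner (T v) u.
Proof. unfold L_diff. rewrite !inner_vsub_l, (L_sym _ _ _ N x u), (L_sym _ _ _ m xh u). reflexivity. Qed.

(* Since the Nystrom sample lies in the data set, the range of T lies in the
   span of phi_0..phi_{N-1}: Parseval's identity holds for T u. *)
Lemma T_parseval u : inner (T u) (T u) = sumR N (fun l => (inner (phi l) (T u))^2).
Proof.
  assert (ExpX : forall i, (i < N)%nat -> forall h,
     inner (Phi (x i)) h = sumR N (fun l => inner (phi l) (Phi (x i)) * inner (phi l) h)).
  { intros i Hi h. apply (sample_expansion X kappa E Phi hPhi N x lam V HdecA); auto.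
    exact lam_pos. }
  assert (ExpXh : forall j, (j < m)%nat -> forall h,
     inner (Phi (xh j)) h = sumR N (fun l => inner (phi l) (Phi (xh j)) * inner (phi l) h)).
  { intros j Hj h. destruct (Hsub j Hj) as [i [Hi ->]]. apply ExpX; auto. }
  unfold L_diff at 1. rewrite inner_vsub_l.
  rewrite (L_range_expansion E X Phi phi N N x ExpX u), (L_range_expansion E X Phi phi N m xh ExpXh u),
    <- sumR_minus.
  apply sumR_ext. intros. unfold L_diff. rewrite inner_vsub_r. ring.
Qed.

Lemma eps_sq : eps ^ 2 = sumR N (fun k => inner (T (phi k)) (T (phi k))).
Proof.
  unfold hs_norm. rewrite pow2_sqrt.
  - rewrite (sumR_ext N (fun k => inner (T (phi k)) (T (phi k)))
                        (fun k => sumR N (fun l => (inner (phi l) (T (phi k)))^2)))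
      by (intros; apply T_parseval).
    apply sumR_swap.
  - apply sumR_nonneg. intros. apply sumR_nonneg. intros. apply pow2_ge_0.
Qed.

(* The HS norm does not depend on the orthonormal family used to compute it:
   sum_j ||T phih_j||^2 <= eps^2. *)
Lemma T_phih_energy : sumR r (fun j => inner (T (phih j)) (T (phih j))) <= eps ^ 2.
Proof.
  rewrite eps_sq.
  rewrite (sumR_ext r _ (fun j => sumR N (fun l => (inner (phi l) (T (phih j)))^2)))
    by (intros; apply T_parseval).
  rewrite sumR_swap. apply sumR_le. intros l Hl.
  rewrite (sumR_ext r _ (fun j => (inner (phih j) (T (phi l)))^2)).
  - apply bessel_on. exact phih_onr.
  - intros j Hj. rewrite (inner_sym _ (phi l)), T_sym, inner_sym. reflexivity.
Qed.

Lemma T_phi_energy : sumR r (fun k => inner (T (phi k)) (T (phi k))) <= eps ^ 2.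
Proof. rewrite eps_sq. apply sumR_mono; [lia|]. intros. apply inner_pos. Qed.

(* Case lamh_{r-1}/m at or above the midpoint of the gap: compare the Nystrom
   eigenfunctions phih_j with the spectral projection of L_N. *)
Lemma gap_case_high : 0 < Delta ->
  (lam (r - 1)%nat / INR N + lam r / INR N) / 2 <= lamh (r - 1)%nat / INR m ->
  (Delta / 2) ^ 2 * sin_theta_sq r phih phi <= eps ^ 2.
Proof.
  intros HD Hmid. assert (HmR : 0 < INR m) by (apply lt_0_INR; lia).
  rewrite sin_theta_sq_sym by (apply phi_onr || apply phih_onr).
  eapply Rle_trans; [|exact T_phih_energy].
  apply (sin_theta_family E X Phi N x r phi (fun k => lam k / INR N) phih
           (fun j => lamh j / INR m) (fun j => T (phih j)) (lam r / INR N)).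
  - exact phi_onr.
  - intros k h Hk. apply (L_eigfun X kappa E Phi hPhi N x lam V HdecA); [lia | apply lam_pos; lia].
  - intros j h Hj. unfold L_diff. rewrite inner_vsub_l.
    rewrite (L_eigfun X kappa E Phi hPhi m xh lamh U HdecB j h) by (try lia; apply lamh_pos; lia).
    ring.
  - intros w Hw. apply (L_rayleigh_tail X kappa E Phi hPhi N x lam V HdecA r); try lia.
    + apply lam_pos. exact HrN.
    + intros. apply lam_decr; lia.
    + intros. apply lam_pos. lia.
    + exact Hw.
  - lra.
  - intros j Hj.
    assert (lamh (r - 1)%nat / INR m <= lamh j / INR m).
    { unfold Rdiv. apply Rmult_le_compat_r; [left; apply Rinv_0_lt_compat; lra|]. apply lamh_decr; lia. }
    unfold Rdiv in *. lra.
Qed.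

(* Case lamh_{r-1}/m below the midpoint of the gap: compare the eigenfunctions
   phi_k with the spectral projection of the Nystrom operator L_m. *)
Lemma gap_case_low : 0 < Delta ->
  lamh (r - 1)%nat / INR m < (lam (r - 1)%nat / INR N + lam r / INR N) / 2 ->
  (Delta / 2) ^ 2 * sin_theta_sq r phih phi <= eps ^ 2.
Proof.
  intros HD Hmid. assert (HNR : 0 < INR N) by (apply lt_0_INR; lia).
  eapply Rle_trans; [|exact T_phi_energy].
  rewrite (sumR_ext r (fun k => inner (T (phi k)) (T (phi k)))
             (fun k => inner (vscal (-1) (T (phi k))) (vscal (-1) (T (phi k)))))
    by (intros; rewrite inner_scal_l, inner_scal_r; ring).
  apply (sin_theta_family E X Phi m xh r phih (fun j => lamh j / INR m) phi
           (fun k => lam k / INR N) (fun k => vscal (-1) (T (phi k))) (lamh (r - 1)%nat / INR m)).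
  - exact phih_onr.
  - intros j h Hj. apply (L_eigfun X kappa E Phi hPhi m xh lamh U HdecB); [lia | apply lamh_pos; lia].
  - intros k h Hk. rewrite inner_scal_l. unfold L_diff. rewrite inner_vsub_l.
    rewrite (L_eigfun X kappa E Phi hPhi N x lam V HdecA k h) by (try lia; apply lam_pos; lia).
    ring.
  - intros w Hw. apply (L_rayleigh_tail X kappa E Phi hPhi m xh lamh U HdecB r); try lia.
    + exact Hlr.
    + intros. apply lamh_decr; lia.
    + intros. apply lamh_pos. lia.
    + exact Hw.
  - lra.
  - intros k Hk.
    assert (lam (r - 1)%nat / INR N <= lam k / INR N).
    { unfold Rdiv. apply Rmult_le_compat_r; [left; apply Rinv_0_lt_compat; lra|]. apply lam_decr; lia. }
    unfold Rdiv in *. lra.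
Qed.

Lemma sin_theta_gap_bound : 0 < Delta ->
  (Delta / 2) ^ 2 * sin_theta_sq r phih phi <= eps ^ 2.
Proof.
  intros HD.
  destruct (Rle_lt_dec ((lam (r - 1)%nat / INR N + lam r / INR N) / 2) (lamh (r - 1)%nat / INR m)).
  - apply gap_case_high; assumption.
  - apply gap_case_low; assumption.
Qed.

End GapEstimate.

(* Arithmetic conclusion: with (Delta/2)^2 F <= eps^2 and Delta > 3 eps,
   2 sqrt F <= 4 eps / Delta <= 4 eps / (Delta - eps) <= 6 eps / Delta. *)
Lemma gap_arith (eps Delta F : R) : 0 <= eps -> 3 * eps < Delta -> 0 <= F ->
  (Delta / 2) ^ 2 * F <= eps ^ 2 ->
  4 * F <= (4 * eps / (Delta - eps)) ^ 2 /\ 4 * eps / (Delta - eps) <= 6 * eps / Delta.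
Proof.
  intros He HD HF Hkey.
  assert (HDe : 0 < Delta - eps) by lra.
  set (c := 4 * eps / (Delta - eps)).
  assert (Hce : c * (Delta - eps) = 4 * eps) by (unfold c; field; lra).
  assert (Hc0 : 0 <= c) by (unfold c, Rdiv; apply Rmult_le_pos; [lra | left; apply Rinv_0_lt_compat; lra]).
  split.
  - assert (Hsq : (c * ((Delta - eps) / 2)) ^ 2 <= (c * (Delta / 2)) ^ 2).
    { assert (0 <= c * ((Delta - eps) / 2)) by nra.
      assert (c * ((Delta - eps) / 2) <= c * (Delta / 2)) by nra. nra. }
    replace (c * ((Delta - eps) / 2)) with (2 * eps) in Hsq by (field_simplify; nra).
    apply (Rmult_le_reg_r ((Delta / 2) ^ 2)); [nra|]. nra.
  - apply (Rmult_le_reg_r ((Delta - eps) * Delta)); [nra|].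
    replace (c * ((Delta - eps) * Delta)) with (4 * eps * Delta) by (unfold c; field; lra).
    replace (6 * eps / Delta * ((Delta - eps) * Delta)) with (6 * eps * (Delta - eps)) by (field; lra).
    nra.
Qed.

(* Indices are 0-based: x_1..x_N = x 0 .. x (N-1), lambda_k = lam (k-1), etc. *)
Theorem theorem5 (X : Type) (kappa : X -> X -> R) (E : InnerProductSpace)
  (Phi : X -> E) (N m r : nat) (x xh : nat -> X)
  (lam : nat -> R) (V : nat -> nat -> R) (lamh : nat -> R) (U : nat -> nat -> R) :
  psd_kernel kappa ->
  (forall z, kappa z z <= 1) ->
  (forall z w, inner (Phi z) (Phi w) = kappa z w) ->
  pos_def N (gram kappa x) ->
  sorted_eigendecomp N (gram kappa x) lam V ->
  (forall j, (j < m)%nat -> exists i, (i < N)%nat /\ xh j = x i) ->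
  sorted_eigendecomp m (gram kappa xh) lamh U ->
  (1 <= r)%nat -> (r < N)%nat -> (r <= m)%nat ->
  0 < lamh (r - 1)%nat ->
  let phi := eigfun Phi N x lam V in
  let phih := eigfun Phi m xh lamh U in
  let eps := hs_norm phi N (fun f => vsub (L_op Phi N x f) (L_op Phi m xh f)) in
  let Delta := (lam (r - 1)%nat - lam r) / INR N in
  Delta > 3 * eps ->
  op_norm_le (fun f => vsub (proj_op phi r f) (proj_op phih r f))
             (4 * eps / (Delta - eps)) /\
  4 * eps / (Delta - eps) <= 6 * eps / Delta.
Proof.
  intros _ _ hPhi Hpd HdecA Hsub HdecB Hr1 HrN Hrm Hlr phi phih eps Delta HD.
  assert (He : 0 <= eps) by apply sqrt_pos.
  assert (HD0 : 0 < Delta) by lra.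
  assert (Hkey : (Delta / 2) ^ 2 * sin_theta_sq r phih phi <= eps ^ 2)
    by (apply (sin_theta_gap_bound X kappa E Phi hPhi N m r x xh lam V lamh U); auto).
  assert (H3 : 3 * eps < Delta) by lra.
  destruct (gap_arith eps Delta (sin_theta_sq r phih phi) He H3 (sin_theta_sq_nonneg _ _ _ _) Hkey)
    as [Hc Hratio].
  split; [|exact Hratio].
  intros f. apply norm_le_of_sq.
  - apply Rmult_le_pos; [lra|]. left. apply Rinv_0_lt_compat. lra.
  - eapply Rle_trans.
    + apply proj_diff_bound; [apply (phi_onr X kappa E Phi hPhi N m r x lam V) |
                              apply (phih_onr X kappa E Phi hPhi N m r xh lamh U)]; auto.
    + apply Rmult_le_compat_r; [apply inner_pos | exact Hc].
Qed.
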